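(* (B case) Let $d\ge1$, $n\ge d$, and let $(\xi_1,\dots,\xi_n)$ be random vectors in $\mathbb{R}^d$ with $(\xi_1,\dots,\xi_n)\stackrel{d}{=}(\varepsilon_1\xi_{\sigma(1)},\dots,\varepsilon_n\xi_{\sigma(n)})$ for all permutations $\sigma$ and all $\varepsilon\in\{-1,1\}^n$, such that any $d$ vectors among $S_1,\dots,S_n$ are linearly independent a.s. Then $\ker A$ a.s. has codimension $d$ in $\mathbb{R}^n$ and a.s. is in general position w.r.t. $\mathcal{A}(B_n)$. (D case) Let $d\ge1$, $n\ge\max\{2,d\}$, and let $(\xi_1,\dots,\xi_n)$ be random vectors in $\mathbb{R}^d$ with the same distributional invariance but only for signs with $\varepsilon_1\cdots\varepsilon_n=1$, such that any $d$ vectors from either collection $S_1,\dots,S_n$ or $S_1,\dots,S_{n-1},S_n^*$ are linearly independent a.s. Then $\ker A$ a.s. has codimension $d$ in $\mathbb{R}^n$ and a.s. is in general position w.r.t. $\mathcal{A}(D_n)$.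
   Context: $S_k=\xi_1+\dots+\xi_k$, $S_n^*=S_{n-1}-\xi_n$, and $A$ is the $d\times n$ matrix with columns $\xi_1,\dots,\xi_n$, viewed as a linear map $\mathbb{R}^n\to\mathbb{R}^d$. $\mathcal{A}(B_n)$ consists of the hyperplanes $x_i=x_j$, $x_i=-x_j$ ($1\le i<j\le n$) and $x_k=0$ ($1\le k\le n$) in $\mathbb{R}^n$; $\mathcal{A}(D_n)$ of the hyperplanes $x_i=x_j$, $x_i=-x_j$ ($1\le i<j\le n$). For an arrangement $\mathcal{A}$ and $\mathcal{B}\subset\mathcal{A}$, $\mathrm{rank}(\mathcal{B})=n-\dim\bigcap_{H\in\mathcal{B}}H$. A linear subspace $M$ of $\mathbb{R}^n$ of codimension $m$ is in general position w.r.t. $\mathcal{A}$ if for every nonempty $\mathcal{B}\subset\mathcal{A}$, $\dim\bigcap_{H\in\mathcal{B}}(H\cap M)$ equals $n-m-\mathrm{rank}(\mathcal{B})$ if $\mathrm{rank}(\mathcal{B})\le n-m$ and $0$ if $\mathrm{rank}(\mathcal{B})\ge n-m$. *)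

From HB Require Import structures.
From mathcomp Require Import all_boot all_order all_algebra all_fingroup.
From mathcomp Require Import all_classical all_reals all_analysis.
Set Implicit Arguments. Unset Strict Implicit. Unset Printing Implicit Defensive.
Import Order.TTheory GRing.Theory Num.Theory.
Local Open Scope classical_set_scope.
Local Open Scope ring_scope.

(* Subspaces of R^n are represented (mxalgebra style) by the row space of a
   matrix; vectors of R^n are row vectors 'rV[R]_n. *)

Definition hyperplane (R : fieldType) (n : nat) (a : 'rV[R]_n) : 'M[R]_n :=
  kermx a^T.

(* an arrangement = finite list of hyperplanes, given by normal vectors;
   a subfamily is a set of indices into that list *)
Definition arr_cap (R : fieldType) (n : nat) (arr : seq 'rV[R]_n)
  (B : {set 'I_(size arr)}) : 'M[R]_n :=
  (\bigcap_(i in B) hyperplane (nth 0 arr i))%MS.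

Definition arr_rank (R : fieldType) (n : nat) (arr : seq 'rV[R]_n)
  (B : {set 'I_(size arr)}) : nat :=
  (n - \rank (arr_cap B))%N.

Definition codim (R : fieldType) (n : nat) (M : 'M[R]_n) : nat :=
  (n - \rank M)%N.

Definition general_position (R : fieldType) (n : nat) (M : 'M[R]_n)
  (arr : seq 'rV[R]_n) : Prop :=
  let m := codim M in
  forall B : {set 'I_(size arr)}, B != finset.set0 ->
    \rank (arr_cap B :&: M)%MS =
      (if (arr_rank B <= n - m)%N then (n - m - arr_rank B)%N else 0%N).

Definition evec (R : fieldType) (n : nat) (i : 'I_n) : 'rV[R]_n := delta_mx 0 i.

Definition arr_D (R : fieldType) (n : nat) : seq 'rV[R]_n :=
  [seq evec R i - evec R j | i : 'I_n <- enum 'I_n, j : 'I_n <- [seq j : 'I_n <- enum 'I_n | (val i < val j)%N]]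
  ++ [seq evec R i + evec R j | i : 'I_n <- enum 'I_n, j : 'I_n <- [seq j : 'I_n <- enum 'I_n | (val i < val j)%N]].

Definition arr_B (R : fieldType) (n : nat) : seq 'rV[R]_n :=
  arr_D R n ++ [seq evec R k | k <- enum 'I_n].

Definition matA (R : fieldType) (d n : nat) (xi : 'I_n -> 'rV[R]_d) : 'M[R]_(d, n) :=
  \matrix_(r < d, i < n) xi i 0 r.

Definition kerA (R : fieldType) (d n : nat) (xi : 'I_n -> 'rV[R]_d) : 'M[R]_n :=
  kermx (matA xi)^T.

(* partial sums S_k = xi_1 + ... + xi_k, indexed by k : 'I_n meaning S_{k+1} *)
Definition Ssum (R : fieldType) (d n : nat) (xi : 'I_n -> 'rV[R]_d) (k : 'I_n) : 'rV[R]_d :=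
  \sum_(i < n | (i <= k)%N) xi i.

Definition Sstar (R : fieldType) (d n : nat) (xi : 'I_n.+1 -> 'rV[R]_d) : 'rV[R]_d :=
  \sum_(i < n.+1 | (i < n)%N) xi i - xi ord_max.

Definition Sstar_coll (R : fieldType) (d n : nat) (xi : 'I_n.+1 -> 'rV[R]_d)
  (k : 'I_n.+1) : 'rV[R]_d :=
  if (k < n)%N then Ssum xi k else Sstar xi.

Definition any_d_indep (R : fieldType) (d n : nat) (v : 'I_n -> 'rV[R]_d) : Prop :=
  forall f : 'I_d -> 'I_n, injective f -> row_free (\matrix_(j < d) v (f j)).

(* Borel sigma-algebra on (R^d)^n, viewed as n x d matrices (row i = xi_i):
   generated by the coordinate maps. *)
Definition mx_coord_gen (R : realType) (n d : nat) : set (set 'M[R]_(n, d)) :=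
  [set A | exists (i : 'I_n) (r : 'I_d) (U : set R),
      measurable U /\ A = (fun M : 'M[R]_(n, d) => M i r) @^-1` U].

Definition mx_borel (R : realType) (n d : nat) (A : set 'M[R]_(n, d)) : Prop :=
  <<s @mx_coord_gen R n d >> A.

Definition random_vectors (R : realType) (dT : measure_display)
  (T : measurableType dT) (d n : nat) (xi : 'I_n -> T -> 'rV[R]_d) : Prop :=
  forall (i : 'I_n) (r : 'I_d), measurable_fun setT (fun w => xi i w 0 r).

Definition joint (R : realType) (T : Type) (d n : nat)
  (xi : 'I_n -> T -> 'rV[R]_d) : T -> 'M[R]_(n, d) :=
  fun w => \matrix_(i < n) xi i w.

Definition eq_in_law (R : realType) (dT : measure_display) (T : measurableType dT)
  (P : probability T R) (n d : nat) (X Y : T -> 'M[R]_(n, d)) : Prop :=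
  forall A, mx_borel A -> P (X @^-1` A) = P (Y @^-1` A).

(* (xi_1..xi_n) =d (eps_1 xi_sigma(1), ..., eps_n xi_sigma(n)), where
   eps_i = (-1)^(e i) *)
Definition signed_perm (R : realType) (T : Type) (d n : nat)
  (xi : 'I_n -> T -> 'rV[R]_d) (s : 'S_n) (e : 'I_n -> bool) : 'I_n -> T -> 'rV[R]_d :=
  fun i w => ((-1) ^+ e i) *: xi (s i) w.

Definition sign_product_one (n : nat) (e : 'I_n -> bool) : Prop :=
  ~~ odd (\sum_(i < n) (e i : nat)).

From HB Require Import structures.
From mathcomp Require Import all_boot all_order all_algebra all_fingroup.
From mathcomp Require Import all_classical all_reals all_analysis.
From mathcomp Require Import zify.
Import Order.TTheory GRing.Theory Num.Theory.
Set Implicit Arguments. Unset Strict Implicit. Unset Printing Implicit Defensive.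
Local Open Scope ring_scope.

(* For a flat L of the arrangement, ker A meets L in the expected dimension
   exactly when rank (L A^T) = min (rank L, d); only the lower bound needs
   work.  The coordinate columns of L fall into classes that agree up to sign,
   and L contains the signed indicator vector of every union of classes.  A
   chain of min (rank L, d) nested such unions is sent by A^T to signed sums
   of the xi over a strictly increasing chain of index sets; a permutation
   turns these into partial sums S_k of signed, permuted xi, which are a.s.
   independent by exchangeability.  In the D case an odd number of sign
   changes is absorbed by flipping the last sign, which turns S_n into S_n^*. *)

Definition rootB_normal (R : fieldType) (n : nat) (a : 'rV[R]_n) :=
  (exists i j (b : bool), i != j /\ a = evec R i + (-1) ^+ b *: evec R j)
  \/ exists k, a = evec R k.

Definition strict_chain (n m : nat) (A : 'I_m -> {set 'I_n}) :=
  (forall t, 0 < #|A t|)%N /\ (forall t t' : 'I_m, (t < t')%N -> A t \proper A t').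

Lemma sub_hyperplane_evec (R : fieldType) (m n : nat) (M : 'M[R]_(m, n)) k :
  (M <= hyperplane (evec R k))%MS = (col k M == 0).
Proof. by rewrite /hyperplane sub_kermx /evec trmx_delta -colE. Qed.

Lemma sub_hyperplane_root (R : fieldType) (m n : nat) (M : 'M[R]_(m, n)) i j c :
  (M <= hyperplane (evec R i + c *: evec R j))%MS = (col i M + c *: col j M == 0).
Proof.
rewrite /hyperplane sub_kermx linearD linearZ /= mulmxDr -scalemxAr.
by rewrite /evec !trmx_delta -!colE.
Qed.

Section ColumnClasses.
Variables (R : fieldType) (n : nat) (L : 'M[R]_n).

Definition col_sim (x y : 'I_n) := (col x L == col y L) || (col x L == - col y L).

Lemma col_sim_refl : reflexive col_sim.
Proof. by move=> x; rewrite /col_sim eqxx. Qed.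

Lemma col_sim_sym : symmetric col_sim.
Proof.
move=> x y; rewrite /col_sim [col x L == col y L]eq_sym.
by rewrite -[col x L == - _]eqr_oppLR [- _ == _]eq_sym.
Qed.

Lemma col_sim_trans : transitive col_sim.
Proof.
move=> y x z; rewrite /col_sim => /orP[]/eqP-> /orP[]/eqP->;
  by rewrite ?opprK eqxx ?orbT.
Qed.

Definition col_rep x := odflt x [pick y | col_sim y x].

Lemma col_sim_rep x : col_sim (col_rep x) x.
Proof. by rewrite /col_rep; case: pickP => [//|/(_ x) /=]; rewrite col_sim_refl. Qed.

Lemma col_rep_eq x y : col_sim x y -> col_rep x = col_rep y.
Proof.
move=> sxy; rewrite /col_rep (@eq_pick _ [pred z | col_sim z x] [pred z | col_sim z y]).
  by case: pickP => [//|/(_ y) /=]; rewrite col_sim_refl.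
move=> z /=; apply/idP/idP => [/col_sim_trans|/col_sim_trans]; apply=> //.
by rewrite col_sim_sym.
Qed.

Lemma col_rep_idem x : col_rep (col_rep x) = col_rep x.
Proof. exact/col_rep_eq/col_sim_rep. Qed.

Definition col_sign x := col x L != col (col_rep x) L.

Lemma col_signE x : col x L = (-1) ^+ col_sign x *: col (col_rep x) L.
Proof.
rewrite /col_sign; case: eqP => [->|ne]; first by rewrite scale1r.
by move: (col_sim_rep x); rewrite col_sim_sym => /orP[/eqP//|/eqP->]; rewrite scaleN1r.
Qed.

Lemma col_rep_eq0 x : (col (col_rep x) L == 0) = (col x L == 0).
Proof. by rewrite (col_signE x) scaler_eq0 signr_eq0. Qed.

Definition col_reps := [set x | (col x L != 0) && (col_rep x == x)].

Lemma submx_col_scale (v : 'rV[R]_n) x y c :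
  (v <= L)%MS -> col x L = c *: col y L -> v 0 x = c * v 0 y.
Proof.
case/submxP=> u -> cxy; have coordE z : (u *m L) 0 z = (u *m col z L) 0 0.
  by rewrite colE mulmxA -colE [RHS]mxE.
by rewrite !coordE cxy -scalemxAr mxE.
Qed.

Lemma submx_eq0 (v : 'rV[R]_n) :
  (v <= L)%MS -> {in col_reps, forall x, v 0 x = 0} -> v = 0.
Proof.
move=> vL v0; apply/rowP => x; rewrite mxE.
have [cx0|cx0] := eqVneq (col x L) 0.
  by rewrite (@submx_col_scale v x x 0) ?mul0r ?scale0r.
rewrite (submx_col_scale vL (col_signE x)) v0 ?mulr0 //.
by rewrite inE col_rep_idem eqxx col_rep_eq0 cx0.
Qed.

Lemma rank_le_card_col_reps : (\rank L <= #|col_reps|)%N.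
Proof.
pose C : 'M[R]_(n, #|col_reps|) := \matrix_(i, t) (i == enum_val t)%:R.
rewrite -(mxrank_mul_ker L C).
suff -> : (L :&: kermx C)%MS = 0 by rewrite mxrank0 addn0 rank_leq_col.
apply/row_matrixP => i; rewrite row0; have := row_sub i (L :&: kermx C)%MS.
rewrite sub_capmx => /andP[iL /sub_kermxP/matrixP iC]; apply: submx_eq0 iL _ => x xR.
have := iC 0 (enum_rank_in xR x); rewrite !mxE (bigD1 x) //= big1.
  by rewrite addr0 !mxE enum_rankK_in // eqxx mulr1.
by move=> y /negbTE ny; rewrite !mxE enum_rankK_in // ny mulr0.
Qed.

Definition sign_ind (P : {set 'I_n}) : 'rV[R]_n :=
  \row_x (if x \in P then (-1) ^+ col_sign x else 0).

Definition col_closed (P : {set 'I_n}) :=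
  {in P, forall x, col x L != 0} /\ (forall x y, col_sim x y -> (x \in P) = (y \in P)).

Lemma sign_ind_sub_hyperplane P a : col_closed P -> rootB_normal a ->
  (L <= hyperplane a)%MS -> (sign_ind P <= hyperplane a)%MS.
Proof.
case=> P_nz P_sim; have notP x : col x L == 0 -> x \notin P := contraL (P_nz x).
case=> [[i [j [b [_ ->]]]] | [k ->]]; last first.
  rewrite !sub_hyperplane_evec => Lk0; apply/eqP/matrixP => ? ?; rewrite !ord1 !mxE.
  by rewrite ifN ?notP.
rewrite !sub_hyperplane_root => /eqP Lij; apply/eqP/matrixP => ? ?; rewrite !ord1 !mxE.
have [Li0|Li0] := eqVneq (col i L) 0.
  have /eqP Lj0 : col j L = 0.
    by apply/eqP; move: Lij; rewrite Li0 add0r => /eqP; rewrite scaler_eq0 signr_eq0.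
  by rewrite !ifN ?notP ?Li0 // mulr0 addr0.
have sij : col_sim i j.
  move/eqP: Lij; rewrite addr_eq0 /col_sim => /eqP->.
  by case: b; rewrite ?scale1r ?scaleN1r ?opprK eqxx ?orbT.
rewrite -(P_sim _ _ sij); case: ifP => iP; last by rewrite mulr0 addr0.
move/eqP: Lij; rewrite (col_signE i) (col_signE j) -(col_rep_eq sij) scalerA -scalerDl.
by rewrite scaler_eq0 col_rep_eq0 (negbTE (P_nz _ iP)) orbF => /eqP.
Qed.

Definition rep_rank x := index (col_rep x) (enum col_reps).

Definition rep_prefix (t : nat) := [set x | (col x L != 0) && (rep_rank x <= t)%N].

Lemma rep_prefix_closed t : col_closed (rep_prefix t).
Proof.
split=> [x|x y sxy]; first by rewrite inE => /andP[].
by rewrite !inE /rep_rank -(col_rep_eq0 x) -(col_rep_eq0 y) (col_rep_eq sxy).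
Qed.

Lemma rep_rank_enum_val (t : 'I_#|col_reps|) : rep_rank (enum_val t) = t.
Proof.
have := enum_valP t; rewrite /rep_rank inE => /andP[_ /eqP->].
by rewrite (enum_val_nth (enum_val t)) index_uniq ?enum_uniq // -cardE.
Qed.

Lemma rep_prefix_strict_chain m : (m <= #|col_reps|)%N ->
  strict_chain (fun t : 'I_m => rep_prefix t).
Proof.
move=> m_le; pose rep_at (t : 'I_m) := enum_val (widen_ord m_le t).
have rep_atE t : rep_rank (rep_at t) = t by rewrite rep_rank_enum_val.
have rep_at_in t : rep_at t \in rep_prefix t.
  by have := enum_valP (widen_ord m_le t); rewrite !inE rep_atE leqnn andbT => /andP[].
split=> [t|t t' ltt']; first by apply/card_gt0P; exists (rep_at t).
apply/properP; split.
  by apply/fintype.subsetP => x; rewrite !inE => /andP[-> /leq_trans->] //; apply: ltnW.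
by exists (rep_at t'); rewrite // inE rep_atE leqNgt ltt' andbF.
Qed.
End ColumnClasses.

Definition signed_chain_sums_free (R : fieldType) (d n : nat) (xi : 'I_n -> 'rV[R]_d) :=
  forall m (A : 'I_m -> {set 'I_n}) (s : 'I_n -> bool), (m <= d)%N -> strict_chain A ->
    row_free (\matrix_(t < m) \sum_(x in A t) (-1) ^+ s x *: xi x).

Section KernelFlats.
Variables (R : fieldType) (d n : nat) (xi : 'I_n -> 'rV[R]_d).

Lemma sign_ind_mul_matA (L : 'M[R]_n) P :
  sign_ind L P *m (matA xi)^T = \sum_(x in P) (-1) ^+ col_sign L x *: xi x.
Proof.
apply/rowP => r; rewrite /sign_ind !mxE summxE [RHS]big_mkcond; apply: eq_bigr => x _.
by rewrite !mxE; case: ifP; rewrite ?mul0r ?mxE.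
Qed.

Lemma rank_flat_mul_matA (L : 'M[R]_n) : signed_chain_sums_free xi ->
  (forall P, col_closed L P -> (sign_ind L P <= L)%MS) ->
  \rank (L *m (matA xi)^T) = minn (\rank L) d.
Proof.
move=> free L_ind; apply/eqP; rewrite eqn_leq leq_min mxrankM_maxl rank_leq_col /=.
set m := minn _ _.
have m_le : (m <= #|col_reps L|)%N := leq_trans (geq_minl _ _) (rank_le_card_col_reps L).
pose V := \matrix_(t < m) sign_ind L (rep_prefix L t).
have VL : (V <= L)%MS by apply/row_subP => t; rewrite rowK; apply/L_ind/rep_prefix_closed.
have := free m _ (col_sign L) (geq_minr _ _) (rep_prefix_strict_chain m_le).
have -> : \matrix_(t < m) \sum_(x in rep_prefix L t) (-1) ^+ col_sign L x *: xi x
          = V *m (matA xi)^T.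
  by apply/row_matrixP => t; rewrite row_mul !rowK sign_ind_mul_matA.
by rewrite /row_free => /eqP <-; apply/mxrankS/submxMr.
Qed.

Lemma sign_ind_sub_arr_cap (arr : seq 'rV[R]_n) (B : {set 'I_(size arr)}) P :
  {in arr, forall a, rootB_normal a} -> col_closed (arr_cap B) P ->
  (sign_ind (arr_cap B) P <= arr_cap B)%MS.
Proof.
move=> arr_root P_closed; apply/sub_bigcapmxP => i iB.
apply: sign_ind_sub_hyperplane P_closed (arr_root _ (mem_nth 0 (ltn_ord i))) _.
by rewrite /arr_cap (bigD1 i) //= capmxSl.
Qed.

Lemma kerA_general_position (arr : seq 'rV[R]_n) : (d <= n)%N ->
  {in arr, forall a, rootB_normal a} -> signed_chain_sums_free xi ->
  codim (kerA xi) = d /\ general_position (kerA xi) arr.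
Proof.
move=> dn arr_root free.
have rank_cap (B : {set 'I_(size arr)}) :
    \rank (arr_cap B *m (matA xi)^T) = minn (\rank (arr_cap B)) d.
  by apply: rank_flat_mul_matA free _ => P; apply: sign_ind_sub_arr_cap.
have rankA : \rank (matA xi)^T = d.
  have := rank_cap finset.set0; rewrite /arr_cap big_set0 mul1mx mxrank1 => ->.
  exact/minn_idPr.
have codimA : codim (kerA xi) = d by rewrite /codim /kerA mxrank_ker rankA subKn.
split=> //; rewrite /general_position /= => B _; rewrite /arr_rank codimA.
have := mxrank_mul_ker (arr_cap B) (matA xi)^T; rewrite rank_cap.
have := rank_leq_row (arr_cap B); rewrite /kerA.
move: (\rank (arr_cap B)) (\rank (arr_cap B :&: kermx (matA xi)^T)%MS) => k r.
by case: ifP; lia.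
Qed.

End KernelFlats.

Lemma rootB_normal_arr_B (R : fieldType) (n : nat) : {in arr_B R n, forall a, rootB_normal a}.
Proof.
have ltn_neq (i j : 'I_n) : (i < j)%N -> i != j by move=> ij; rewrite -val_eqE neq_ltn ij.
move=> a; rewrite /arr_B /arr_D !mem_cat => /orP[/orP[]|].
- case/allpairsPdep => i [j [_ + ->]]; rewrite mem_filter => /andP[/ltn_neq ij _].
  by left; exists i, j, true; rewrite scaleN1r.
- case/allpairsPdep => i [j [_ + ->]]; rewrite mem_filter => /andP[/ltn_neq ij _].
  by left; exists i, j, false; rewrite scale1r.
- by case/mapP => k _ ->; right; exists k.
Qed.

Lemma rootB_normal_arr_D (R : fieldType) (n : nat) : {in arr_D R n, forall a, rootB_normal a}.
Proof. by move=> a a_D; apply: rootB_normal_arr_B; rewrite mem_cat a_D. Qed.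

Section KeyRank.
Variables (n : nat) (key : 'I_n -> nat).

Lemma key_rank_subproof x : (#|[set y | (key y < key x)%N]| < n)%N.
Proof.
have : [set y | (key y < key x)%N] \subset [set~ x].
  by apply/fintype.subsetP => y; rewrite !inE; apply: contraTneq => ->; rewrite ltnn.
by move/subset_leq_card; rewrite cardsC1 card_ord; have := ltn_ord x; lia.
Qed.

Definition key_rank x : 'I_n := Ordinal (key_rank_subproof x).

Lemma key_rank_ltn x y : (key x < key y)%N -> (key_rank x < key_rank y)%N.
Proof.
move=> kxy; apply: proper_card; apply/properP; split.
  by apply/fintype.subsetP => z; rewrite !inE => /ltn_trans; apply.
by exists x; rewrite !inE ?ltnn.
Qed.

Lemma key_rank_inj : injective key -> injective key_rank.
Proof.
move=> key_inj x y e; apply: key_inj.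
by have [/key_rank_ltn|/key_rank_ltn|] := ltngtP (key x) (key y); rewrite ?e ?ltnn.
Qed.

Lemma key_rank_lt_card (D : {set 'I_n}) :
  (forall x y, x \in D -> y \notin D -> (key x < key y)%N) ->
  forall x, (key_rank x < #|D|)%N = (x \in D).
Proof.
move=> keyD x; have [xD|xD] := boolP (x \in D); last first.
  rewrite ltnNge; apply/negbF/subset_leq_card/fintype.subsetP => y yD.
  by rewrite inE keyD.
rewrite (cardsD1 x D) xD add1n ltnS; apply/subset_leq_card/fintype.subsetP => y.
rewrite !inE => kyx; apply/andP; split; first by apply: contraTneq kyx => ->; rewrite ltnn.
by apply: contraTT kyx => yD; rewrite -leqNgt ltnW ?keyD.
Qed.

End KeyRank.

Section StrictChain.
Variables (n m : nat) (A : 'I_m -> {set 'I_n}).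
Hypothesis chainA : strict_chain A.

Lemma chain_subset (t t' : 'I_m) : (t <= t')%N -> A t \subset A t'.
Proof.
rewrite leq_eqVlt => /orP[/eqP/val_inj->//|/chainA.2/proper_sub//].
Qed.

(* Points lying in more sets of the chain come first, ties broken by index. *)
Definition chain_key x := (#|[set t | x \notin A t]| * n + x)%N.

Lemma chain_key_inj : injective chain_key.
Proof.
move=> x y /(congr1 (modn^~ n)); rewrite /chain_key !modnMDl !modn_small //.
exact: val_inj.
Qed.

Lemma chain_key_lt x y t : x \in A t -> y \notin A t -> (chain_key x < chain_key y)%N.
Proof.
move=> xA yA; have : (#|[set t | x \notin A t]| < #|[set t | y \notin A t]|)%N.
  apply: proper_card; apply/properP; split; last by exists t; rewrite !inE ?xA.
  apply/fintype.subsetP => t'; rewrite !inE; apply: contraNN => yA'.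
  have [tt'|t't] := leqP t t'; first exact: fintype.subsetP (chain_subset tt') _ xA.
  by move: yA; rewrite (fintype.subsetP (chain_subset (ltnW t't)) _ yA').
rewrite /chain_key => lt_cnt; have := ltn_ord x; nia.
Qed.

Lemma chain_card_inj : injective (fun t => #|A t|).
Proof.
move=> t t' e; have [lt|lt|/val_inj//] := ltngtP t t';
  by have := proper_card (chainA.2 _ _ lt); rewrite e ltnn.
Qed.

Lemma chain_prefix_perm : exists (s : 'S_n) (f : 'I_m -> 'I_n),
  injective f /\ forall t (i : 'I_n), (i <= f t)%N = (s i \in A t).
Proof.
pose p := perm (key_rank_inj chain_key_inj); pose s := (p^-1)%g.
have card_lt t : (#|A t|.-1 < n)%N.
  by rewrite prednK ?chainA.1 // -[X in (_ <= X)%N]card_ord max_card.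
exists s, (fun t => Ordinal (card_lt t)); split.
  move=> t t' /(congr1 (succn \o val)) /=.
  by rewrite !prednK ?chainA.1 // => /chain_card_inj.
move=> t i /=; have rank_s : key_rank chain_key (s i) = i.
  by rewrite -[RHS](permKV p i) [in RHS]permE.
rewrite -ltnS prednK ?chainA.1 // -{1}rank_s key_rank_lt_card // => x y; exact: chain_key_lt.
Qed.

End StrictChain.

Lemma Ssum_perm_prefix (R : fieldType) (d n : nat) (v : 'I_n -> 'rV[R]_d) (s : 'S_n)
  (D : {set 'I_n}) (k : 'I_n) :
  (forall i : 'I_n, (i <= k)%N = (s i \in D)) -> Ssum (fun i => v (s i)) k = \sum_(x in D) v x.
Proof.
move=> kD; rewrite /Ssum (reindex_inj (@perm_inj _ (s^-1)%g)) /=.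
by apply: eq_big => x; rewrite ?kD permKV.
Qed.

Lemma widen_ord_inj (m n : nat) (le_mn : (m <= n)%N) : injective (widen_ord le_mn).
Proof. by move=> i j /(congr1 val) /= /val_inj. Qed.

Lemma injective_extension (m d n : nat) (f : 'I_m -> 'I_n) (md : (m <= d)%N) :
  (d <= n)%N -> injective f ->
  exists2 F : 'I_d -> 'I_n, injective F & forall t, F (widen_ord md t) = f t.
Proof.
move=> dn f_inj; set s := codom f ++ enum [predC codom f].
have s_size : size s == n.
  by rewrite size_cat size_codom -cardE -(card_codom f_inj) cardC !card_ord.
have s_uniq : uniq (Tuple s_size).
  rewrite /= cat_uniq enum_uniq andbT map_inj_uniq ?enum_uniq //=.
  by apply/hasPn => x; rewrite mem_enum inE.
exists (tnth (Tuple s_size) \o widen_ord dn) => [|t].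
  exact/inj_comp/widen_ord_inj/tuple_uniqP.
rewrite /= (tnth_nth (f t)) /= nth_cat size_codom card_ord ltn_ord.
by rewrite (nth_map t) ?size_enum_ord ?nth_ord_enum.
Qed.

Lemma row_free_rowsub (R : fieldType) (m' m n : nat) (g : 'I_m' -> 'I_m) (A : 'M[R]_(m, n)) :
  injective g -> row_free A -> row_free (rowsub g A).
Proof.
move=> g_inj /row_freeP[B AB]; apply/row_freeP; exists (B *m (rowsub g 1%:M)^T).
rewrite rowsubE mulmxA -(mulmxA _ A) AB mulmx1.
apply/matrixP => t t'; rewrite !mxE (bigD1 (g t')) //= big1 => [|k /negbTE nk].
  by rewrite !mxE eqxx mulr1 addr0 (inj_eq g_inj).
by rewrite !mxE [g t' == k]eq_sym nk mulr0.
Qed.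

Lemma any_d_indep_row_free (R : fieldType) (m d n : nat) (v : 'I_n -> 'rV[R]_d)
  (f : 'I_m -> 'I_n) :
  (m <= d)%N -> (d <= n)%N -> any_d_indep v -> injective f ->
  row_free (\matrix_(t < m) v (f t)).
Proof.
move=> md dn v_indep f_inj; have [F F_inj Ff] := injective_extension md dn f_inj.
have -> : \matrix_(t < m) v (f t) = rowsub (widen_ord md) (\matrix_(j < d) v (F j)).
  by apply/matrixP => t r; rewrite !mxE Ff.
exact/row_free_rowsub/v_indep/F_inj/widen_ord_inj.
Qed.

Lemma signed_chain_sums_free_of_prefix (R : fieldType) (d n : nat) (xi : 'I_n -> 'rV[R]_d) :
  (d <= n)%N ->
  (forall (s : 'S_n) (b : 'I_n -> bool),
     exists2 V, any_d_indep V & V =1 Ssum (fun i => (-1) ^+ b i *: xi (s i))) ->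
  signed_chain_sums_free xi.
Proof.
move=> dn indep_perm m A sg md chainA.
have [s [f [f_inj fA]]] := chain_prefix_perm chainA.
have [V V_indep VE] := indep_perm s (fun i => sg (s i)).
have := any_d_indep_row_free md dn V_indep f_inj.
congr row_free; apply/matrixP => t r; rewrite !mxE VE.
by rewrite (Ssum_perm_prefix (fun x => (-1) ^+ sg x *: xi x) (fA t)).
Qed.

Lemma signed_chain_sums_free_B (R : fieldType) (d n : nat) (xi : 'I_n -> 'rV[R]_d) :
  (d <= n)%N ->
  (forall (s : 'S_n) (e : 'I_n -> bool),
     any_d_indep (Ssum (fun i => (-1) ^+ e i *: xi (s i)))) ->
  signed_chain_sums_free xi.
Proof.
move=> dn indep; apply: signed_chain_sums_free_of_prefix dn _ => s e.
by exists (Ssum (fun i => (-1) ^+ e i *: xi (s i))); first exact: indep.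
Qed.

Lemma odd_sum_bool (n : nat) (b : 'I_n -> bool) :
  odd (\sum_i (b i : nat)) = \big[addb/false]_i b i.
Proof. by rewrite (big_morph odd oddD erefl); apply: eq_bigr => i _; rewrite oddb. Qed.

Lemma odd_sum_flip_last (n : nat) (b : 'I_n.+1 -> bool) :
  odd (\sum_i (b i (+) (i == ord_max) : nat)) = ~~ odd (\sum_i (b i : nat)).
Proof.
have last_only : \big[addb/false]_(i < n.+1) (i == ord_max) = true.
  by rewrite (bigD1 ord_max) //= eqxx big1 // => i /negbTE.
by rewrite !odd_sum_bool big_split /= last_only addbT.
Qed.

Lemma Sstar_coll_flip_last (R : fieldType) (d n : nat) (v : 'I_n.+1 -> 'rV[R]_d)
  (b : 'I_n.+1 -> bool) :
  Sstar_coll (fun i => (-1) ^+ (b i (+) (i == ord_max)) *: v i)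
  =1 Ssum (fun i => (-1) ^+ b i *: v i).
Proof.
move=> k; rewrite /Sstar_coll; case: ifP => [kn|kn].
  apply: eq_bigr => i ik; suff /negbTE-> : i != ord_max by rewrite addbF.
  by rewrite -val_eqE /= neq_ltn (leq_ltn_trans ik kn).
have -> : k = ord_max by apply/val_inj/eqP; rewrite /= eqn_leq -ltnS ltn_ord leqNgt kn.
rewrite /Sstar /Ssum [RHS](bigD1 ord_max) //= addrC; congr (_ + _).
  apply: eq_big => i; first by rewrite -val_eqE /= ltn_neqAle andbC.
  by move=> i_lt; rewrite -val_eqE /= ltn_eqF ?addbF.
by rewrite eqxx; case: (b ord_max); rewrite /= ?scale1r ?scaleN1r ?opprK.
Qed.

Lemma signed_chain_sums_free_D (R : fieldType) (d n : nat) (xi : 'I_n.+1 -> 'rV[R]_d) :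
  (d <= n.+1)%N ->
  (forall (s : 'S_n.+1) (e : 'I_n.+1 -> bool), sign_product_one e ->
     any_d_indep (Ssum (fun i => (-1) ^+ e i *: xi (s i))) /\
     any_d_indep (Sstar_coll (fun i => (-1) ^+ e i *: xi (s i)))) ->
  signed_chain_sums_free xi.
Proof.
move=> dn indep; apply: signed_chain_sums_free_of_prefix dn _ => s b.
have [b_even|b_odd] := boolP (~~ odd (\sum_i (b i : nat))).
  by exists (Ssum (fun i => (-1) ^+ b i *: xi (s i))); first exact: (indep s b b_even).1.
exists (Sstar_coll (fun i => (-1) ^+ (b i (+) (i == ord_max)) *: xi (s i))).
  by apply: (indep s _ _).2; rewrite /sign_product_one odd_sum_flip_last.
exact: Sstar_coll_flip_last.
Qed.

Lemma matrix_lincomb (R : fieldType) (m n d : nat) (c : 'I_m -> 'I_n -> R)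
  (v : 'I_n -> 'rV[R]_d) :
  \matrix_(j < m) (\sum_i c j i *: v i) = (\matrix_(j, i) c j i) *m \matrix_(i < n) v i.
Proof. by apply/matrixP => j r; rewrite !mxE summxE; apply: eq_bigr => i _; rewrite !mxE. Qed.

Lemma Ssum_lincomb (R : fieldType) (d n : nat) (v : 'I_n -> 'rV[R]_d) :
  Ssum v = fun k => \sum_(i < n) ((i <= k)%N)%:R *: v i.
Proof.
apply/funext => k; rewrite /Ssum big_mkcond; apply: eq_bigr => i _.
by case: ifP; rewrite ?scale1r ?scale0r.
Qed.

Lemma Sstar_coll_lincomb (R : fieldType) (d n : nat) (v : 'I_n.+1 -> 'rV[R]_d) :
  Sstar_coll v = fun k => \sum_(i < n.+1)
    (if (k < n)%N then ((i <= k)%N)%:R else if (i < n)%N then 1 else -1) *: v i.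
Proof.
apply/funext => k; rewrite /Sstar_coll; case: ifP => kn; first by rewrite Ssum_lincomb.
rewrite /Sstar big_mkcond [RHS]big_ord_recr big_ord_recr /= ltnn addr0 scaleN1r.
by congr (_ - _); apply: eq_bigr => i _; rewrite ltn_ord scale1r.
Qed.

Local Open Scope classical_set_scope.

(* g_sigma_algebraType needs a pointed carrier; the alias avoids a global
   pointed instance on matrices. *)
Definition mx_coord_space (R : realType) (n d : nat) : Type := 'M[R]_(n, d).
HB.instance Definition _ R n d := Choice.copy (mx_coord_space R n d) 'M[R]_(n, d).
HB.instance Definition _ R n d := isPointed.Build (mx_coord_space R n d) 0.

Definition mx_borel_space (R : realType) (n d : nat) :=
  g_sigma_algebraType (@mx_coord_gen R n d : set (set (mx_coord_space R n d))).

Section MatrixBorel.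
Variables (R : realType) (n d : nat).

Lemma measurable_mx_coord i r :
  measurable_fun [set: mx_borel_space R n d] (fun M : 'M[R]_(n, d) => M i r).
Proof. by move=> _ U mU; rewrite setTI; apply: sub_sigma_algebra; exists i, r, U. Qed.

Lemma measurable_det_mulmx (K : 'M[R]_(d, n)) :
  measurable_fun [set: mx_borel_space R n d] (fun M : 'M[R]_(n, d) => \det (K *m M)).
Proof.
apply: measurable_sum => s; apply: measurable_realfun.measurable_funM; first exact: measurable_cst.
apply: measurable_prod => j _; under eq_fun do rewrite mxE.
apply: measurable_sum => k; apply: measurable_realfun.measurable_funM; first exact: measurable_cst.
exact: measurable_mx_coord.
Qed.

Lemma mx_borel_not_row_free (K : 'M[R]_(d, n)) :
  mx_borel [set M : 'M[R]_(n, d) | ~ row_free (K *m M)].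
Proof.
have -> : [set M : 'M[R]_(n, d) | ~ row_free (K *m M)] =
    [set: mx_borel_space R n d] `&`
    (fun M : mx_borel_space R n d => \det (K *m (M : 'M[R]_(n, d)))) @^-1` [set 0].
  apply/seteqP; split => M /=; rewrite row_free_unit unitmxE unitfE.
    by move/negP; rewrite negbK => /eqP.
  by case=> _ ->; rewrite eqxx.
exact: (measurable_det_mulmx K measurableT (measurable_set1 0)).
Qed.

End MatrixBorel.

Section EqualInLaw.
Variables (R : realType) (dT : measure_display) (T : measurableType dT)
  (P : probability T R).

Lemma measurable_preimage_mx_borel (n d : nat) (X : T -> 'M[R]_(n, d)) :
  (forall i r, measurable_fun [set: T] (fun w => X w i r)) ->
  forall A, mx_borel A -> measurable (X @^-1` A).
Proof.
move=> mX A mA; rewrite -[X @^-1` A]setTI.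
apply: (@measurability _ _ _ (mx_borel_space R n d) _ _ (@mx_coord_gen R n d)) => //.
by move=> _ [_ [i [r [U [mU ->]]]] <-]; apply: mX.
Qed.

Lemma ae_row_free_eq_in_law (n d : nat) (X Y : T -> 'M[R]_(n, d)) (K : 'M[R]_(d, n)) :
  (forall i r, measurable_fun [set: T] (fun w => X w i r)) ->
  (forall i r, measurable_fun [set: T] (fun w => Y w i r)) ->
  eq_in_law P X Y ->
  {ae P, forall w, row_free (K *m X w)} -> {ae P, forall w, row_free (K *m Y w)}.
Proof.
move=> mX mY XY [N [mN PN0 sN]]; have bad := mx_borel_not_row_free K.
exists (Y @^-1` [set M | ~ row_free (K *m M)]); split => //.
  exact: measurable_preimage_mx_borel.
rewrite -XY //; apply/eqP; rewrite eq_le measure_ge0 andbT -PN0.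
by apply: le_measure => //; rewrite inE //; apply: measurable_preimage_mx_borel.
Qed.

Lemma ae_forall_fun (I J : finType) (Q : (I -> J) -> T -> Prop) :
  (forall f, {ae P, forall w, Q f w}) -> {ae P, forall w, forall f, Q f w}.
Proof.
move=> hQ; apply: filterS (filter_forall _ (fun g : {ffun I -> J} => hQ g)) => w Qw f.
by have := Qw [ffun x => f x]; congr Q; apply/funext => x; rewrite ffunE.
Qed.

Lemma ae_any_d_indep (d n : nat) (v : T -> 'I_n -> 'rV[R]_d) :
  (forall f : 'I_d -> 'I_n, injective f ->
     {ae P, forall w, row_free (\matrix_(j < d) v w (f j))}) ->
  {ae P, forall w, any_d_indep (v w)}.
Proof.
move=> hv; apply: ae_forall_fun => f.
have [f_inj|f_not_inj] := pselect (injective f); last by apply: aeW.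
by apply: filterS (hv f f_inj) => w.
Qed.

Variables (d n : nat).

Lemma measurable_joint (xi : 'I_n -> T -> 'rV[R]_d) :
  random_vectors xi -> forall i r, measurable_fun [set: T] (fun w => joint xi w i r).
Proof. by move=> xi_rv i r; under eq_fun do rewrite mxE; exact: xi_rv. Qed.

Lemma random_vectors_signed_perm (xi : 'I_n -> T -> 'rV[R]_d) s e :
  random_vectors xi -> random_vectors (signed_perm xi s e).
Proof.
move=> xi_rv i r; under eq_fun do rewrite mxE.
by apply: measurable_realfun.measurable_funM; [exact: measurable_cst|exact: xi_rv].
Qed.

Lemma ae_any_d_indep_eq_in_law (m : nat) (S : ('I_n -> 'rV[R]_d) -> 'I_m -> 'rV[R]_d)
  (c : 'I_m -> 'I_n -> R) (X Y : 'I_n -> T -> 'rV[R]_d) :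
  (forall v, S v = fun k => \sum_i c k i *: v i) ->
  random_vectors X -> random_vectors Y -> eq_in_law P (joint X) (joint Y) ->
  {ae P, forall w, any_d_indep (S (fun i => X i w))} ->
  {ae P, forall w, any_d_indep (S (fun i => Y i w))}.
Proof.
move=> SE X_rv Y_rv XY hX; apply: ae_any_d_indep => f f_inj.
pose K := \matrix_(j < d, i < n) c (f j) i.
have S_mulmx v : \matrix_(j < d) S v (f j) = K *m \matrix_(i < n) v i.
  by rewrite SE -matrix_lincomb; apply/matrixP => j r; rewrite !mxE.
have transfer := ae_row_free_eq_in_law (K := K) (measurable_joint X_rv)
  (measurable_joint Y_rv) XY.
apply: filterS (transfer _) => [w|]; first by rewrite S_mulmx.
by apply: filterS hX => w /(_ f f_inj); rewrite S_mulmx.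
Qed.

End EqualInLaw.

Lemma ae_kerA_general_position_B (R : realType) (dT : measure_display)
    (T : measurableType dT) (P : probability T R) (d n : nat)
    (xi : 'I_n -> T -> 'rV[R]_d) :
  (d <= n)%N -> random_vectors xi ->
  (forall (s : 'S_n) (e : 'I_n -> bool),
      eq_in_law P (joint xi) (joint (signed_perm xi s e))) ->
  (forall f : 'I_d -> 'I_n, injective f ->
      {ae P, forall w, row_free (\matrix_(j < d) Ssum (fun i => xi i w) (f j))}) ->
  {ae P, forall w, codim (kerA (fun i => xi i w)) = d /\
                   general_position (kerA (fun i => xi i w)) (arr_B R n)}.
Proof.
move=> dn xi_rv law hS.
have S_indep := ae_any_d_indep (v := fun w => Ssum (fun i => xi i w)) hS.
have hsigned : {ae P, forall w, forall (s : 'S_n) (e : 'I_n -> bool),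
    any_d_indep (Ssum (fun i => signed_perm xi s e i w))}.
  apply: filter_forall => s; apply: ae_forall_fun => e.
  exact: ae_any_d_indep_eq_in_law (@Ssum_lincomb _ d n) xi_rv
    (random_vectors_signed_perm s e xi_rv) (law s e) S_indep.
apply: filterS hsigned => w hw.
exact: kerA_general_position dn (@rootB_normal_arr_B R n) (signed_chain_sums_free_B dn hw).
Qed.

Lemma ae_kerA_general_position_D (R : realType) (dT : measure_display)
    (T : measurableType dT) (P : probability T R) (d n : nat)
    (xi : 'I_n.+1 -> T -> 'rV[R]_d) :
  (d <= n.+1)%N -> random_vectors xi ->
  (forall (s : 'S_n.+1) (e : 'I_n.+1 -> bool), sign_product_one e ->
      eq_in_law P (joint xi) (joint (signed_perm xi s e))) ->
  (forall f : 'I_d -> 'I_n.+1, injective f ->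
      {ae P, forall w, row_free (\matrix_(j < d) Ssum (fun i => xi i w) (f j))}) ->
  (forall f : 'I_d -> 'I_n.+1, injective f ->
      {ae P, forall w, row_free (\matrix_(j < d) Sstar_coll (fun i => xi i w) (f j))}) ->
  {ae P, forall w, codim (kerA (fun i => xi i w)) = d /\
                   general_position (kerA (fun i => xi i w)) (arr_D R n.+1)}.
Proof.
move=> dn xi_rv law hS hSstar.
have S_indep := ae_any_d_indep (v := fun w => Ssum (fun i => xi i w)) hS.
have Sstar_indep := ae_any_d_indep (v := fun w => Sstar_coll (fun i => xi i w)) hSstar.
have hsigned : {ae P, forall w, forall (s : 'S_n.+1) (e : 'I_n.+1 -> bool),
    sign_product_one e ->
    any_d_indep (Ssum (fun i => signed_perm xi s e i w)) /\
    any_d_indep (Sstar_coll (fun i => signed_perm xi s e i w))}.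
  apply: filter_forall => s; apply: ae_forall_fun => e.
  have [e_even|e_odd] := pselect (sign_product_one e); last by apply: aeW.
  have e_rv := random_vectors_signed_perm s e xi_rv.
  apply: filterS2
    (ae_any_d_indep_eq_in_law (@Ssum_lincomb _ d n.+1) xi_rv e_rv (law s e e_even) S_indep)
    (ae_any_d_indep_eq_in_law (@Sstar_coll_lincomb _ d n) xi_rv e_rv (law s e e_even)
       Sstar_indep).
  by move=> w S_w Sstar_w _.
apply: filterS hsigned => w hw.
exact: kerA_general_position dn (@rootB_normal_arr_D R n.+1) (signed_chain_sums_free_D dn hw).
Qed.

Theorem lemma6p3 :
  (* B case *)
  (forall (R : realType) (dT : measure_display) (T : measurableType dT)
      (P : probability T R) (d n : nat) (xi : 'I_n -> T -> 'rV[R]_d),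
    (1 <= d)%N -> (d <= n)%N ->
    random_vectors xi ->
    (forall (s : 'S_n) (e : 'I_n -> bool),
        eq_in_law P (joint xi) (joint (signed_perm xi s e))) ->
    (forall f : 'I_d -> 'I_n, injective f ->
        {ae P, forall w, row_free (\matrix_(j < d) Ssum (fun i => xi i w) (f j))}) ->
    {ae P, forall w, codim (kerA (fun i => xi i w)) = d /\
                     general_position (kerA (fun i => xi i w)) (arr_B R n)})
  /\
  (* D case *)
  (forall (R : realType) (dT : measure_display) (T : measurableType dT)
      (P : probability T R) (d n : nat) (xi : 'I_n.+1 -> T -> 'rV[R]_d),
    (1 <= d)%N -> (2 <= n.+1)%N -> (d <= n.+1)%N ->
    random_vectors xi ->
    (forall (s : 'S_n.+1) (e : 'I_n.+1 -> bool), sign_product_one e ->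
        eq_in_law P (joint xi) (joint (signed_perm xi s e))) ->
    (forall f : 'I_d -> 'I_n.+1, injective f ->
        {ae P, forall w, row_free (\matrix_(j < d) Ssum (fun i => xi i w) (f j))}) ->
    (forall f : 'I_d -> 'I_n.+1, injective f ->
        {ae P, forall w, row_free (\matrix_(j < d) Sstar_coll (fun i => xi i w) (f j))}) ->
    {ae P, forall w, codim (kerA (fun i => xi i w)) = d /\
                     general_position (kerA (fun i => xi i w)) (arr_D R n.+1)}).
Proof.
split=> [R dT T P d n xi _|R dT T P d n xi _ _].
- exact: ae_kerA_general_position_B.
- exact: ae_kerA_general_position_D.
Qed.
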